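(* Let $d\geq 2$ and let $\mathcal{D}\subset\mathbb{R}^d$ be bounded and convex with non-empty interior. If $\alpha=(\alpha_1,\ldots,\alpha_d)\in\mathbb{R}^d$ is such that \[\sup_{T_1,\ldots,T_d\geq1} L(\alpha,\mathcal{D}_{T^{-1}})=\infty,\] then \[\liminf_{n\to\infty} n\,\|n\alpha_1\|_{\mathbb{R}/\mathbb{Z}}\cdots\|n\alpha_d\|_{\mathbb{R}/\mathbb{Z}}=0.\]
   Context: For a set $\mathcal{D}\subset\mathbb{R}^d$ and $q\in\mathcal{D}$, $\tau(q,\mathcal{D})=\min\{n\in\mathbb{N}^*\mid q+n\alpha\in\mathcal{D}+\mathbb{Z}^d\}$ with $\mathbb{N}^*=\{1,2,\ldots\}$, and $L(\alpha,\mathcal{D})$ is the number of distinct values of $\tau(q,\mathcal{D})$ as $q$ ranges over $\mathcal{D}$. For $T=\operatorname{diag}(T_1,\ldots,T_d)$ with $T_i>0$, $\mathcal{D}_{T^{-1}}=\{xT^{-1}\mid x\in\mathcal{D}\}$. $\|x\|_{\mathbb{R}/\mathbb{Z}}$ denotes the distance from $x$ to the nearest integer. *)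

From mathcomp Require Import all_boot all_order all_algebra.
From mathcomp Require Import reals.
Set Implicit Arguments. Unset Strict Implicit. Unset Printing Implicit Defensive.
Import Order.TTheory GRing.Theory Num.Theory.
Local Open Scope ring_scope.

Section Defs.
Variables (R : realType) (d : nat).

Definition bounded_set (D : ('I_d -> R) -> Prop) : Prop :=
  exists M : R, forall x, D x -> forall i, `|x i| <= M.

Definition convex_set (D : ('I_d -> R) -> Prop) : Prop :=
  forall x y t, D x -> D y -> 0 <= t -> t <= 1 ->
    D (fun i => t * x i + (1 - t) * y i).

(* non-empty interior (for the sup-norm / equivalently Euclidean topology) *)
Definition nonempty_interior (D : ('I_d -> R) -> Prop) : Prop :=
  exists x, exists e : R, 0 < e /\
    forall y, (forall i, `|y i - x i| < e) -> D y.

Definition in_D_plus_Zd (D : ('I_d -> R) -> Prop) (y : 'I_d -> R) : Prop :=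
  exists k : 'I_d -> int, D (fun i => y i - (k i)%:~R).

Definition is_tau (alpha : 'I_d -> R) (D : ('I_d -> R) -> Prop)
    (q : 'I_d -> R) (n : nat) : Prop :=
  (0 < n)%N /\ in_D_plus_Zd D (fun i => q i + n%:R * alpha i) /\
  forall m : nat, (0 < m)%N ->
    in_D_plus_Zd D (fun i => q i + m%:R * alpha i) -> (n <= m)%N.

Definition tau_values (alpha : 'I_d -> R) (D : ('I_d -> R) -> Prop)
    (n : nat) : Prop :=
  exists q, D q /\ is_tau alpha D q n.

(* L(alpha, D) >= N : there are at least N distinct values of tau *)
Definition L_ge (alpha : 'I_d -> R) (D : ('I_d -> R) -> Prop) (N : nat) : Prop :=
  exists s : seq nat, uniq s /\ size s = N /\
    forall n, n \in s -> tau_values alpha D n.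

Definition scale_inv (T : 'I_d -> R) (D : ('I_d -> R) -> Prop) :
    ('I_d -> R) -> Prop :=
  fun y => exists x, D x /\ forall i, y i = x i / T i.

End Defs.

Definition dist_Z (R : realType) (x : R) : R :=
  Num.min (x - (Num.floor x)%:~R) ((Num.floor x)%:~R + 1 - x).

From mathcomp Require Import all_boot all_order all_algebra reals boolp.
From mathcomp Require Import ring lra zify.
Import Order.TTheory GRing.Theory Num.Theory.
Set Implicit Arguments. Unset Strict Implicit. Unset Printing Implicit Defensive.
Local Open Scope ring_scope.

(* If the liminf were positive, then m * prod_i |m alpha_i - k_i| >= c > 0 for all m >= 1
   and all integer vectors k.  D_{T^-1} contains a box of radii r_i = e / T_i and lies in a
   box of radii lam * r_i, with e and lam independent of T.  Two return times n < n' make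
   (n' - n) alpha lie within 4 lam r_i of Z^d, so they are at least c / ((4 lam)^d prod r_i)
   apart.  Conversely every return time is at most K / prod r_i: Dirichlet's theorem in
   well-chosen boxes, together with the lower bound c, gives integer vectors almost parallel
   to the coordinate axes and a short vector dominating them, and an integer combination of
   these lands within r of any target (inhomogeneous transference).  Hence L is at most
   K (4 lam)^d / c + 1 for every T. *)

Section RealFacts.
Variable R : realType.

Definition fract (x : R) : R := x - (Num.floor x)%:~R.

Lemma fract_ge0 (x : R) : 0 <= fract x.
Proof. by rewrite subr_ge0 floor_le. Qed.

Lemma fract_lt1 (x : R) : fract x < 1.
Proof. by have := floorD1_gt x; rewrite /fract intrD; lra. Qed.

Lemma truncn_div_eq_dist (u v w : R) : 0 <= u -> 0 <= v -> 0 < w ->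
  Num.truncn (u / w) = Num.truncn (v / w) -> `|v - u| < w.
Proof.
move=> u0 v0 w0 uv.
have /andP[u1 u2] := truncn_itv (divr_ge0 u0 (ltW w0)).
have /andP[v1 v2] := truncn_itv (divr_ge0 v0 (ltW w0)).
rewrite uv -natr1 in u1 u2; rewrite -natr1 in v2.
have : `|v / w - u / w| < 1 by rewrite ltr_norml; apply/andP; split; lra.
by rewrite -mulrBl normrM normfV (gtr0_norm w0) ltr_pdivrMr // mul1r.
Qed.

Lemma succ_truncn_inv_mul_le2 (w : R) : 0 < w <= 1 ->
  (Num.truncn w^-1).+1%:R * w <= 2.
Proof.
case/andP=> w0 w1.
have wi0 : 0 <= w^-1 by rewrite invr_ge0 ltW.
have t : (Num.truncn w^-1)%:R * w <= 1.
  by rewrite -ler_pdivlMr // div1r; have /andP[] := truncn_itv wi0.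
by rewrite -natr1 mulrDl mul1r; lra.
Qed.

Lemma round_multiple (v z : R) : v != 0 ->
  exists kappa : int,
    `|kappa%:~R * v - z| <= `|v| / 2 /\ `|kappa%:~R : R| <= `|z| / `|v| + 1.
Proof.
move=> v0; exists (Num.floor (z / v + 2^-1)).
have := floor_le (z / v + 2^-1); have := floorD1_gt (z / v + 2^-1).
set kappa := Num.floor _; rewrite intrD => hi lo.
have close : `|kappa%:~R - z / v| <= 2^-1 by rewrite ler_norml; apply/andP; split; lra.
split; first by rewrite -[z](divfK v0) -mulrBl normrM mulrC ler_wpM2l.
have := ler_normD (kappa%:~R - z / v) (z / v).
by rewrite subrK normrM normfV; lra.
Qed.

Lemma size_separated_le (s : seq nat) (B g : R) : 0 < g -> uniq s ->
  (forall n, n \in s -> n%:R <= B) ->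
  (forall n n', n \in s -> n' \in s -> (n < n')%N -> g <= n'%:R - n%:R) ->
  (size s <= (Num.truncn (B / g)).+1)%N.
Proof.
move=> g0 us sB sep.
pose bin (n : nat) := Num.truncn (n%:R / g).
have bin_inj : {in s &, injective bin}.
  suff bin_lt n n' : n \in s -> n' \in s -> (n < n')%N -> bin n <> bin n'.
    move=> n n' ns n's eqb; case: (ltngtP n n') => // [lt|gt].
    - by case: (bin_lt n n' ns n's lt).
    - by case: (bin_lt n' n n's ns gt).
  move=> ns n's lt /(truncn_div_eq_dist (ler0n _ _) (ler0n _ _) g0).
  have nn' : n%:R <= n'%:R :> R by rewrite ler_nat ltnW.
  by rewrite ger0_norm ?subr_ge0 // => /(le_lt_trans (sep n n' ns n's lt)); rewrite ltxx.
rewrite -(size_map bin) -(size_iota 0 (Num.truncn (B / g)).+1).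
apply: uniq_leq_size; first by rewrite map_inj_in_uniq.
move=> _ /mapP[n ns ->]; rewrite mem_iota add0n ltnS le_truncn //.
by apply: ler_wpM2r; [rewrite invr_ge0 ltW | exact: sB].
Qed.

Lemma dist_Z_ge0 (x : R) : 0 <= dist_Z x.
Proof.
have := floor_le x; have := floorD1_gt x.
by rewrite /dist_Z le_min intrD => ? ?; apply/andP; split; lra.
Qed.

Lemma dist_Z_le_norm (x : R) (k : int) : dist_Z x <= `|x - k%:~R|.
Proof.
have := floor_le x; have := floorD1_gt x.
rewrite /dist_Z ge_min intrD; set f := Num.floor x => hi lo.
case: (lerP k f) => [kf|fk].
  have kf' : k%:~R <= f%:~R :> R by rewrite ler_int.
  by apply/orP; left; rewrite ger0_norm; lra.
have fk' : (f + 1)%:~R <= k%:~R :> R by rewrite ler_int; lia.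
by apply/orP; right; rewrite intrD in fk'; rewrite ler0_norm; lra.
Qed.

End RealFacts.

Lemma pigeonhole_ord (T : finType) (n : nat) (f : 'I_n -> T) :
  (#|T| < n)%N -> exists i j : 'I_n, (i < j)%N /\ f i = f j.
Proof.
move=> Tn.
have /injectivePn[i [j ij fij]] : ~~ injectiveb f.
  by apply/negP => /injectiveP/leq_card; rewrite card_ord leqNgt Tn.
case: (ltngtP i j) => [lt|gt|/val_inj eq]; first by exists i, j.
- by exists j, i.
- by rewrite eq eqxx in ij.
Qed.

Lemma card_dffun_ord (d : nat) (C : 'I_d -> nat) :
  #|{dffun forall i : 'I_d, 'I_(C i)}| = (\prod_(i < d) C i)%N.
Proof.
rewrite card_dep_ffun foldrE big_map big_enum /=.
by apply: eq_bigr => i _; rewrite card_ord.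
Qed.

Lemma prodr_scale (R : comPzRingType) (d : nat) (x : R) (F : 'I_d -> R) :
  \prod_(i < d) (x * F i) = x ^+ d * \prod_(i < d) F i.
Proof. by rewrite big_split /= prodr_const card_ord. Qed.

Section Approximation.
Variables (R : realType) (d : nat) (alpha : 'I_d -> R).

Definition dev (m : nat) (k : 'I_d -> int) (i : 'I_d) : R :=
  m%:R * alpha i - (k i)%:~R.

Lemma dirichlet_box (w : 'I_d -> R) : (forall i, 0 < w i <= 1) ->
  exists m k, [/\ (0 < m)%N, m%:R * \prod_i w i <= 2 ^+ d &
                  forall i, `|dev m k i| < w i].
Proof.
move=> w01.
pose C i := (Num.truncn (w i)^-1).+1.
pose cell (j : nat) i := Num.truncn (fract (j%:R * alpha i) / w i).
have cell_lt j i : (cell j i < C i)%N.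
  have /andP[w0 _] := w01 i.
  rewrite ltnS le_truncn // -[leRHS]mul1r ler_wpM2r ?invr_ge0 ?(ltW w0) //.
  exact/ltW/fract_lt1.
pose P := (\prod_(i < d) C i)%N.
pose f (j : 'I_P.+1) : {dffun forall i, 'I_(C i)} := [ffun i => Ordinal (cell_lt j i)].
have [a [b [ab fab]]] : exists a b : 'I_P.+1, (a < b)%N /\ f a = f b.
  by apply: pigeonhole_ord; rewrite card_dffun_ord.
pose k i := Num.floor (b%:R * alpha i) - Num.floor (a%:R * alpha i).
exists (b - a)%N, k.
split; first by rewrite subn_gt0.
- apply: le_trans (_ : P%:R * \prod_i w i <= _).
    rewrite ler_wpM2r ?prodr_ge0 ?ler_nat // => [i _|]; first by case/andP: (w01 i) => /ltW.
    by rewrite leq_subLR -ltnS (leq_trans (ltn_ord b)) // ltnS leq_addl.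
  apply: le_trans (_ : \prod_(i < d) (2 : R) <= _); last by rewrite prodr_const card_ord.
  rewrite natr_prod -big_split; apply: ler_prod => i _; have /andP[w0 _] := w01 i.
  by rewrite mulr_ge0 ?(ltW w0) //=; exact: succ_truncn_inv_mul_le2.
- move=> i; have /andP[w0 _] := w01 i.
  have /(congr1 val) cell_ab : f a i = f b i by rewrite fab.
  rewrite /= !ffunE /= in cell_ab.
  have -> : dev (b - a) k i = fract (b%:R * alpha i) - fract (a%:R * alpha i).
    by rewrite /dev /k /fract (natrB _ (ltnW ab)) intrB; ring.
  exact: truncn_div_eq_dist (fract_ge0 _) (fract_ge0 _) w0 cell_ab.
Qed.

Lemma dev_lincomb (m0 N : nat) (k0 : 'I_d -> int) (m : 'I_d -> nat)
    (k : 'I_d -> 'I_d -> int) (kappa : 'I_d -> int) :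
  N%:R = m0%:R + \sum_l (kappa l)%:~R * (m l)%:R :> R ->
  forall i, dev N (fun i => k0 i + \sum_l kappa l * k l i) i
            = dev m0 k0 i + \sum_l (kappa l)%:~R * dev (m l) (k l) i.
Proof.
move=> NE i.
have -> : \sum_l (kappa l)%:~R * dev (m l) (k l) i
    = (\sum_l (kappa l)%:~R * (m l)%:R) * alpha i - (\sum_l kappa l * k l i)%:~R.
  rewrite mulr_suml rmorph_sum -sumrB; apply: eq_bigr => l _.
  by rewrite /dev rmorphM /=; ring.
by rewrite /dev NE rmorphD /=; ring.
Qed.

Lemma exists_nat_lincomb (m0 : nat) (m : 'I_d -> nat) (kappa : 'I_d -> int) :
  (0 < m0)%N -> \sum_l `|(kappa l)%:~R : R| * (m l)%:R <= m0%:R / 2 ->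
  exists N : nat, [/\ (0 < N)%N,
    N%:R = m0%:R + \sum_l (kappa l)%:~R * (m l)%:R :> R & N%:R <= 3 / 2 * m0%:R :> R].
Proof.
move=> m00 small.
have m0R : 0 < m0%:R :> R by rewrite ltr0n.
set NR := m0%:R + _.
have /andP[lo hi] : - (m0%:R / 2) <= NR - m0%:R <= m0%:R / 2.
  rewrite -ler_norml addrC addKr; apply: le_trans (ler_norm_sum _ _ _) _.
  by apply: le_trans small; apply: ler_sum => l _; rewrite normrM normr_nat.
pose N : int := m0%:Z + \sum_l kappa l * (m l)%:Z.
have NE : N%:~R = NR.
  by rewrite rmorphD rmorph_sum /=; congr (_ + _); apply: eq_bigr => l _; rewrite rmorphM.
have N0 : 0 < N by rewrite -(ltr0z R) NE; lra.
exists `|N|%N; rewrite natr_absz gtr0_norm // NE; split => //; last by lra.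
by rewrite absz_gt0 gt_eqF.
Qed.

Lemma dev_lincomb_close (m0 N : nat) (k0 : 'I_d -> int) (m : 'I_d -> nat)
    (k : 'I_d -> 'I_d -> int) (kappa : 'I_d -> int) (r z : 'I_d -> R) :
  N%:R = m0%:R + \sum_l (kappa l)%:~R * (m l)%:R :> R ->
  (forall i, `|dev m0 k0 i| < r i / 2) ->
  (forall l i, `|(kappa l)%:~R * dev (m l) (k l) i - (if l == i then z i else 0)|
                 <= r i / (2 * d%:R)) ->
  forall i, `|dev N (fun i => k0 i + \sum_l kappa l * k l i) i - z i| < r i.
Proof.
move=> NE close0 close i.
have d0 : 0 < d%:R :> R by rewrite ltr0n (leq_ltn_trans (leq0n i) (ltn_ord i)).
have zE : z i = \sum_l (if l == i then z i else 0) by rewrite -big_mkcond big_pred1_eq.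
rewrite (dev_lincomb k0 k NE) [z i]zE -addrA -sumrB; set S := \sum_l _.
have S_le : `|S| <= r i / 2.
  apply: le_trans (ler_norm_sum _ _ _) _.
  apply: le_trans (_ : _ <= \sum_(l < d) r i / (2 * d%:R)) _.
    by apply: ler_sum => l _; exact: close.
  rewrite sumr_const card_ord -[_ *+ d]mulr_natl.
  suff -> : d%:R * (r i / (2 * d%:R)) = r i / 2 by [].
  by field; rewrite gt_eqF.
by have := ler_normD (dev m0 k0 i) S; have := close0 i; lra.
Qed.

Definition mult_badly_approximable (c : R) : Prop :=
  forall (m : nat) (k : 'I_d -> int), (0 < m)%N -> c <= m%:R * \prod_i `|dev m k i|.

(* Testing the multiple m * N0.+1 >= N0 of m also covers the finitely many m < N0. *)
Lemma mult_badly_approximable_of_ge (eps : R) (N0 : nat) : 0 < eps ->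
  (forall n, (N0 <= n)%N -> eps <= n%:R * \prod_i dist_Z (n%:R * alpha i)) ->
  mult_badly_approximable (eps / N0.+1%:R ^+ d.+1).
Proof.
move=> eps0 eps_le m k m0; set M := N0.+1.
have NmM : (N0 <= m * M)%N by rewrite (leq_trans (leqnSn N0)) // leq_pmull.
have dist_le i : dist_Z ((m * M)%N%:R * alpha i) <= M%:R * `|dev m k i|.
  apply: le_trans (dist_Z_le_norm _ (M%:Z * k i)) _.
  have -> : (m * M)%N%:R * alpha i - (M%:Z * k i)%:~R = M%:R * dev m k i.
    by rewrite /dev natrM intrM; ring.
  by rewrite normrM normr_nat.
have prod_le : \prod_i dist_Z ((m * M)%N%:R * alpha i) <= M%:R ^+ d * \prod_i `|dev m k i|.
  by rewrite -prodr_scale; apply: ler_prod => i _; rewrite dist_Z_ge0 dist_le.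
rewrite ler_pdivrMr ?exprn_gt0 // exprS.
have := ler_wpM2l (ler0n R (m * M)) prod_le; have := eps_le _ NmM.
by rewrite natrM; lra.
Qed.

Definition hits_box (K rho : R) (r : 'I_d -> R) : Prop :=
  forall z, (forall i, `|z i| <= rho * r i) -> exists n k,
    [/\ (0 < n)%N, n%:R * \prod_i r i <= K & forall i, `|dev n k i - z i| < r i].

Section BadlyApproximable.
Variable c : R.
Hypothesis hc : mult_badly_approximable c.

Lemma dirichlet_box_lower (w : 'I_d -> R) : (forall i, 0 < w i <= 1) ->
  exists m k, [/\ (0 < m)%N, m%:R * \prod_i w i <= 2 ^+ d &
                  forall i, c / 2 ^+ d * w i <= `|dev m k i| < w i].
Proof.
move=> w01; have [m [k [m0 mw close]]] := dirichlet_box w01.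
exists m, k; split => // i; rewrite close andbT.
have /andP[w0 _] := w01 i.
pose P := \prod_(j | j != i) w j.
have cP : c <= m%:R * (`|dev m k i| * P).
  apply: le_trans (hc k m0) _; rewrite ler_wpM2l // (bigD1 i) //= ler_wpM2l //.
  by apply: ler_prod => j _; rewrite normr_ge0 ltW.
rewrite (bigD1 i) //= -/P in mw.
have P0 : 0 <= P by apply: prodr_ge0 => j _; case/andP: (w01 j) => /ltW.
rewrite mulrAC ler_pdivrMr ?exprn_gt0 //.
by have := normr_ge0 (dev m k i); nra.
Qed.

Lemma near_axis_approx (a eps : R) (r : 'I_d -> R) (l : 'I_d) :
  0 < a <= 1 -> 0 < eps <= 1 -> (forall i, 0 < r i <= 1) ->
  exists m k, [/\ (0 < m)%N, m%:R * (a * eps) ^+ d * \prod_i r i <= 2 ^+ d,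
    c / 2 ^+ d * a * r l <= `|dev m k l| < a * r l &
    forall i, i != l -> `|dev m k i| < eps * r i].
Proof.
move=> /andP[a0 a1] /andP[e0 e1] r01.
pose W i := (if i == l then a else eps) * r i.
have W01 i : 0 < W i <= 1.
  have /andP[r0 r1] := r01 i.
  by rewrite /W; case: eqP => _; rewrite mulr_gt0 //= mulr_ile1 // ltW.
have [m [k [m0 mW close]]] := dirichlet_box_lower W01.
exists m, k; split => //.
- apply: le_trans mW; rewrite -mulrA ler_wpM2l // -prodr_scale.
  apply: ler_prod => i _; have /andP[r0 _] := r01 i.
  rewrite (mulr_ge0 (mulr_ge0 (ltW a0) (ltW e0)) (ltW r0)) /= /W.
  rewrite ler_wpM2r ?(ltW r0) //.
  by case: eqP => _; [exact: ler_piMr (ltW a0) e1 | exact: ler_piMl (ltW e0) a1].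
- by have := close l; rewrite /W eqxx mulrA.
- by move=> i il; have /andP[_] := close i; rewrite /W (negbTE il).
Qed.

(* [hits_box] is obtained with N = m0 + sum_l kappa_l m_l: the l-th near-axis vector has
   l-th entry between c a r_l / 2^d and a r_l and other entries below eps r_i, so rounding
   z_l to one of its multiples needs |kappa_l| <= kmax; the short vector m0 (entries below
   delta r_i) dominates sum_l |kappa_l| m_l, which keeps N positive. *)
Section Constants.
Variables (lam a eps delta kmax : R).
Hypotheses (c0 : 0 < c) (lam0 : 0 < lam) (a01 : 0 < a <= 1) (da : d%:R * a <= 1).
Hypotheses (eps01 : 0 < eps <= 1) (dke : 2 * d%:R * kmax * eps <= 1).
Hypothesis kmax_ge : lam / (c / 2 ^+ d * a) + 1 <= kmax.
Hypotheses (delta01 : 0 < delta <= 2^-1)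
  (delta_small : 2 * d%:R * kmax * 2 ^+ d * delta ^+ d <= c * (a * eps) ^+ d).

Lemma axis_rounding (r z : 'I_d -> R) (l : 'I_d) :
  (forall i, 0 < r i <= 1) -> (forall i, `|z i| <= lam * r i) ->
  exists m k (kappa : int), [/\ (0 < m)%N,
    m%:R * (a * eps) ^+ d * \prod_i r i <= 2 ^+ d, `|kappa%:~R : R| <= kmax &
    forall i, `|kappa%:~R * dev m k i - (if l == i then z i else 0)| <= r i / (2 * d%:R)].
Proof.
move=> r01 zr.
have [m [k [m0 mr /andP[lo hi] off]]] := near_axis_approx l a01 eps01 r01.
have /andP[a0 _] := a01; have /andP[e0 _] := eps01; have /andP[rl0 _] := r01 l.
have d0 : 0 < d%:R :> R by rewrite ltr0n (leq_ltn_trans (leq0n l) (ltn_ord l)).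
have beta0 : 0 < c / 2 ^+ d * a by rewrite !mulr_gt0 ?invr_gt0 ?exprn_gt0.
have v0 : 0 < `|dev m k l| by apply: lt_le_trans lo; rewrite mulr_gt0.
have [kappa [round kappa_le]] : exists kappa : int,
    `|kappa%:~R * dev m k l - z l| <= `|dev m k l| / 2 /\
    `|kappa%:~R : R| <= `|z l| / `|dev m k l| + 1.
  by apply: round_multiple; rewrite -normr_gt0.
have kappa_kmax : `|kappa%:~R : R| <= kmax.
  apply: le_trans kappa_le (le_trans _ kmax_ge); rewrite lerD2r ler_pdivrMr //.
  apply: le_trans (zr l) (le_trans _ (ler_wpM2l _ lo)).
    by rewrite mulrA divfK ?gt_eqF.
  exact: divr_ge0 (ltW lam0) (ltW beta0).
have d20 : 0 < 2 * d%:R :> R by lra.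
exists m, k, kappa; split => // i; rewrite ler_pdivlMr //; case: eqP => [<-|/eqP li].
  have := ler_wpM2r (ltW d20) round; have := ler_wpM2r (ltW d0) (ltW hi).
  by have := ler_wpM2r (ltW rl0) da; lra.
have /andP[ri0 _] := r01 i.
have offi : `|dev m k i| < eps * r i by apply: off; rewrite eq_sym.
have := ler_pM (normr_ge0 _) (normr_ge0 _) kappa_kmax (ltW offi).
rewrite subr0 normrM => /(ler_wpM2r (ltW d20)).
by have := ler_wpM2r (ltW ri0) dke; lra.
Qed.

Lemma hits_box_of_constants (r : 'I_d -> R) : (forall i, 0 < r i <= 1) ->
  hits_box (2 ^+ d.+1 / delta ^+ d) lam r.
Proof.
move=> r01 z zr.
have /fin_all_exists[m hm] := fun l => axis_rounding l r01 zr.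
have /fin_all_exists[k hk] := hm.
have /fin_all_exists[kappa hkappa] := hk.
have /andP[delta0 delta_half] := delta01.
have /andP[a0 _] := a01; have /andP[e0 _] := eps01.
have P0 : 0 < \prod_i r i by apply: prodr_gt0 => i _; case/andP: (r01 i).
have dP0 : 0 < delta ^+ d * \prod_i r i by rewrite mulr_gt0 ?exprn_gt0.
have X0 : 0 < (a * eps) ^+ d * \prod_i r i by rewrite mulr_gt0 ?exprn_gt0 ?mulr_gt0.
have dr01 i : 0 < delta * r i <= 1.
  have /andP[r0 r1] := r01 i; by rewrite mulr_gt0 //= mulr_ile1 //; lra.
have [m0 [k0 [m00 m0r close0]]] := dirichlet_box dr01.
rewrite prodr_scale in m0r.
have m0_lo : c <= m0%:R * (delta ^+ d * \prod_i r i).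
  apply: le_trans (hc k0 m00) _; rewrite -prodr_scale ler_wpM2l // ler_prod // => i _.
  by rewrite normr_ge0 ltW.
have budget : d%:R * (kmax * 2 ^+ d) <= m0%:R / 2 * ((a * eps) ^+ d * \prod_i r i).
  rewrite -(ler_pM2l (exprn_gt0 d delta0)).
  have := ler_wpM2r (exprn_ge0 d (ltW (mulr_gt0 a0 e0))) m0_lo.
  by move: delta_small; lra.
have small : \sum_l `|(kappa l)%:~R : R| * (m l)%:R <= m0%:R / 2.
  rewrite -(ler_pM2r X0); apply: le_trans budget.
  apply: le_trans (_ : \sum_(l < d) kmax * 2 ^+ d <= _); last first.
    by rewrite sumr_const card_ord mulr_natl.
  rewrite mulr_suml; apply: ler_sum => l _; have [_ ml kl _] := hkappa l.
  rewrite -mulrA; apply: ler_pM => //; last by rewrite mulrA.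
  exact: mulr_ge0 (ler0n _ _) (ltW X0).
have [N [N0 NE Nle]] := exists_nat_lincomb m00 small.
exists N, (fun i => k0 i + \sum_l kappa l * k l i); split => //.
  rewrite exprS ler_pdivlMr ?exprn_gt0 //.
  have := ler_wpM2r (ltW dP0) Nle; have := exprn_gt0 d (ltr0Sn R 1).
  by move: m0r; lra.
apply: dev_lincomb_close NE _ _ => [i | l i]; last by have [_ _ _] := hkappa l.
have /andP[r0 _] := r01 i; have := close0 i; nra.
Qed.

End Constants.

Lemma inhomogeneous_box_approx (lam : R) : (0 < d)%N -> 0 < c -> 0 < lam ->
  exists K : R, forall r, (forall i, 0 < r i <= 1) -> hits_box K lam r.
Proof.
move=> d0 c0 lam0.
have dR : 1 <= d%:R :> R by rewrite ler1n.
have pow0 : 0 < 2 ^+ d :> R by rewrite exprn_gt0.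
pose a : R := d%:R^-1.
pose kmax := lam / (c / 2 ^+ d * a) + 1.
pose eps := (2 * d%:R * kmax)^-1.
pose bound := c * (a * eps) ^+ d / (2 * d%:R * kmax * 2 ^+ d).
pose delta := Num.min 2^-1 bound.
have a01 : 0 < a <= 1 by rewrite invr_gt0 invf_le1; lra.
have da : d%:R * a <= 1 by rewrite mulfV ?gt_eqF //; lra.
have /andP[a0 _] := a01.
have beta0 : 0 < c / 2 ^+ d * a by rewrite mulr_gt0 // divr_gt0.
have kmax1 : 1 <= kmax by rewrite lerDr; apply: divr_ge0; apply: ltW.
have eps01 : 0 < eps <= 1 by rewrite invr_gt0 invf_le1; nra.
have dke : 2 * d%:R * kmax * eps <= 1 by rewrite mulfV ?gt_eqF //; nra.
have /andP[e0 _] := eps01.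
have denom0 : 0 < 2 * d%:R * kmax * 2 ^+ d by rewrite !mulr_gt0 //; lra.
have bound0 : 0 < bound by rewrite divr_gt0 // mulr_gt0 // exprn_gt0 // mulr_gt0.
have delta01 : 0 < delta <= 2^-1 by rewrite lt_min bound0 ge_min lexx /=; lra.
have /andP[delta0 _] := delta01.
have delta_small : 2 * d%:R * kmax * 2 ^+ d * delta ^+ d <= c * (a * eps) ^+ d.
  rewrite mulrC -ler_pdivlMr //.
  apply: le_trans (ler_iXnr d0 (ltW delta0) _) _; first by lra.
  by rewrite ge_min lexx orbT.
exists (2 ^+ d.+1 / delta ^+ d).
exact: hits_box_of_constants c0 lam0 a01 da eps01 dke (lexx kmax) delta01 delta_small.
Qed.

End BadlyApproximable.

Section ReturnTimes.
Variables (E : ('I_d -> R) -> Prop) (p r : 'I_d -> R) (lam : R).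
Hypothesis E_bounded : forall y, E y -> forall i, `|y i| <= lam * r i.

Lemma tau_values_gap c : mult_badly_approximable c ->
  forall n n', tau_values alpha E n -> tau_values alpha E n' -> (n < n')%N ->
  c <= (n' - n)%N%:R * ((4 * lam) ^+ d * \prod_i r i).
Proof.
move=> hc n n' [q [Eq [_ [[k Ek] _]]]] [q' [Eq' [_ [[k' Ek'] _]]]] lt.
apply: le_trans (hc (n' - n)%N (fun i => k' i - k i) _) _; first by rewrite subn_gt0.
rewrite ler_wpM2l // -prodr_scale; apply: ler_prod => i _; rewrite normr_ge0 /=.
move: (E_bounded Eq i) (E_bounded Eq' i) (E_bounded Ek i) (E_bounded Ek' i) => /=.
set u := q i + _ - _; set u' := q' i + _ - _.
have -> : dev (n' - n) (fun i => k' i - k i) i = (u' - q' i) - (u - q i).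
  by rewrite /dev /u /u' (natrB _ (ltnW lt)) intrB; ring.
have := ler_normB (u' - q' i) (u - q i).
by have := ler_normB u' (q' i); have := ler_normB u (q i); lra.
Qed.

Hypothesis E_box : forall y, (forall i, `|y i - p i| < r i) -> E y.

Lemma tau_values_le (K : R) : (forall i, 0 < r i) -> hits_box K (2 * lam) r ->
  forall n, tau_values alpha E n -> n%:R * \prod_i r i <= K.
Proof.
move=> r0 cover n [q [Eq [_ [_ tau_min]]]].
have Ep : E p by apply: E_box => i; rewrite subrr normr0.
have [m [k [m0 mK close]]] : exists m k, [/\ (0 < m)%N, m%:R * \prod_i r i <= K &
    forall i, `|dev m k i - (p i - q i)| < r i].
  apply: cover => i; apply: le_trans (ler_normB _ _) _.
  by have := E_bounded Ep i; have := E_bounded Eq i; lra.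
apply: le_trans mK; rewrite ler_wpM2r ?ler_nat ?prodr_ge0 // => [i _|]; first exact: ltW.
apply: tau_min m0 _; exists k; apply: E_box => i /=.
by have := close i; rewrite /dev; congr (`|_| < _); ring.
Qed.

Lemma size_tau_values_le (c K : R) (s : seq nat) :
  mult_badly_approximable c -> 0 < c -> 0 < lam -> (forall i, 0 < r i) ->
  hits_box K (2 * lam) r -> uniq s -> (forall n, n \in s -> tau_values alpha E n) ->
  (size s <= (Num.truncn (K * (4 * lam) ^+ d / c)).+1)%N.
Proof.
move=> hc c0 lam0 r0 cover us tau_s.
pose P := \prod_i r i; pose g := c / (4 * lam) ^+ d.
have P0 : 0 < P by apply: prodr_gt0 => i _.
have pow0 : 0 < (4 * lam) ^+ d by rewrite exprn_gt0 // mulr_gt0.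
have -> : K * (4 * lam) ^+ d / c = K / P / (g / P).
  by rewrite /g; field; rewrite !gt_eqF.
apply: (size_separated_le _ us) => [| n ns | n n' ns n's lt].
- by rewrite !divr_gt0.
- by rewrite ler_pdivlMr //; exact: tau_values_le r0 cover _ (tau_s n ns).
- rewrite -(natrB _ (ltnW lt)) !ler_pdivrMr // -mulrA [P * _]mulrC.
  by have := tau_values_gap hc (tau_s n ns) (tau_s n' n's) lt.
Qed.

End ReturnTimes.
End Approximation.

Section ScaleInv.
Variables (R : realType) (d : nat) (D : ('I_d -> R) -> Prop) (T : 'I_d -> R).
Hypothesis T0 : forall i, 0 < T i.

Lemma scale_inv_bounded (M e : R) : 0 < e -> (forall x, D x -> forall i, `|x i| <= M) ->
  forall y, scale_inv T D y -> forall i, `|y i| <= M / e * (e / T i).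
Proof.
move=> e0 DM y [x [Dx yE]] i.
rewrite mulrA divfK ?gt_eqF // yE normrM normfV (gtr0_norm (T0 i)).
by apply: ler_wpM2r; [rewrite invr_ge0 ltW | exact: DM].
Qed.

Lemma scale_inv_box (x0 : 'I_d -> R) (e : R) :
  (forall y, (forall i, `|y i - x0 i| < e) -> D y) ->
  forall y, (forall i, `|y i - x0 i / T i| < e / T i) -> scale_inv T D y.
Proof.
move=> De y close; exists (fun i => y i * T i); split => [|i]; last by rewrite mulfK ?gt_eqF.
apply: De => i /=.
have -> : y i * T i - x0 i = (y i - x0 i / T i) * T i by rewrite mulrBl divfK ?gt_eqF.
by rewrite normrM (gtr0_norm (T0 i)) -ltr_pdivlMr.
Qed.

End ScaleInv.

Theorem theorem1p7 (R : realType) (d : nat) (Hd : (2 <= d)%N)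
    (D : ('I_d -> R) -> Prop) (alpha : 'I_d -> R) :
  bounded_set D -> convex_set D -> nonempty_interior D ->
  (* sup_{T_1,...,T_d >= 1} L(alpha, D_{T^{-1}}) = infinity *)
  (forall N : nat, exists T : 'I_d -> R,
      (forall i, 1 <= T i) /\ L_ge alpha (scale_inv T D) N) ->
  (* liminf_{n -> oo} n * ||n alpha_1|| ... ||n alpha_d|| = 0
     (the terms are nonnegative) *)
  forall (eps : R), 0 < eps -> forall N : nat, exists n : nat, (N <= n)%N /\
    n%:R * \prod_(i < d) dist_Z (n%:R * alpha i) < eps.
Proof.
move=> [M DM] _ [x0 [e [e0 De]]] L_unbounded eps eps0 N0.
apply: contrapT => small.
have hc : mult_badly_approximable alpha (eps / N0.+1%:R ^+ d.+1).
  apply: mult_badly_approximable_of_ge eps0 _ => n nN0.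
  by rewrite leNgt; apply/negP => lt; apply: small; exists n.
set c := _ / _ in hc; have c0 : 0 < c by rewrite divr_gt0 ?exprn_gt0.
pose e' := Num.min e 1; pose M' := Num.max M 1; pose lam := M' / e'.
have e'0 : 0 < e' by rewrite lt_min e0 ltr01.
have lam0 : 0 < lam by rewrite divr_gt0 // lt_max ltr01 orbT.
have DM' x : D x -> forall i, `|x i| <= M' by move=> Dx i; rewrite le_max DM.
have De' y : (forall i, `|y i - x0 i| < e') -> D y.
  by move=> close; apply: De => i; rewrite (lt_le_trans (close i)) // ge_min lexx.
have [K cover] := inhomogeneous_box_approx hc (ltnW Hd) c0 (mulr_gt0 (ltr0Sn R 1) lam0).
have [T [T1 [s [us [size_s tau_s]]]]] :=
  L_unbounded (Num.truncn (K * (4 * lam) ^+ d / c)).+2.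
have T0 i : 0 < T i by apply: lt_le_trans (T1 i).
have r0 i : 0 < e' / T i by rewrite divr_gt0.
have r01 i : 0 < e' / T i <= 1.
  by rewrite r0 ler_pdivrMr // mul1r (le_trans _ (T1 i)) // ge_min lexx orbT.
have := size_tau_values_le (scale_inv_bounded T0 e'0 DM') (scale_inv_box T0 De') hc c0 lam0
  r0 (cover _ r01) us tau_s.
by rewrite size_s ltnn.
Qed.
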